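(* Let $G$ be a finite unipotent group scheme over an algebraically closed field $k$ of characteristic $p>0$, and suppose $A=kG$ has generators $u_1,\dots,u_n$ ($n>1$) satisfying Hypothesis H1. Then: (a) The set $\{u_1^{i_1}u_2^{i_2}\cdots u_n^{i_n} : 0\le i_j<p,\ j=1,\dots,n\}$ is a $k$-basis of $A$. (b) For each $s=1,\dots,n$, $J_s=Au_s+Au_{s+1}+\dots+Au_n$ is a two-sided ideal of $A$, and $x\,u_s^{p-1}u_{s+1}^{p-1}\cdots u_n^{p-1}=0$ for every $x\in J_s$. (c) Let $v=a_1u_1+\dots+a_nu_n$ with $a_1,\dots,a_n\in k$ and $a_i\neq 0$ for some $i<n$. If $v^p=0$, then $v^{p-1}u_n^{p-1}\neq 0$ (in particular $v^{p-1}\notin Au_n$), and the subalgebra of $A$ generated by $v$ and $u_n$ is isomorphic to $k[s,t]/(s^p,t^p)$ via $s\mapsto v$, $t\mapsto u_n$ (i.e. to the group algebra of an elementary abelian $p$-group of rank $2$).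
   Context: Hypothesis H1: $G$ is a finite unipotent group scheme and $A=kG$ is generated as a $k$-algebra by elements $u_1,\dots,u_n$, $n>1$, such that (a) $u_i^p=0$ for all $i$; (b) for each $i=1,\dots,n-1$ the image of $u_i$ is central in $A/I_i$, where $I_i$ is the two-sided ideal generated by $u_{i+1},\dots,u_n$; (c) $u_n$ is central in $A$; (d) $\dim_k A=p^n$. *)

From HB Require Import structures.
From mathcomp Require Import all_boot all_order all_algebra all_field.
Set Implicit Arguments. Unset Strict Implicit. Unset Printing Implicit Defensive.
Import GRing.Theory.
Local Open Scope ring_scope.

Definition ideal_gen (K : fieldType) (A : falgType K) (S : {vspace A}) :
  {vspace A} := (fullv * S * fullv)%VS.

Definition span_after (K : fieldType) (A : falgType K) (n : nat)
  (u : 'I_n -> A) (i : nat) : {vspace A} :=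
  <<[seq u j | j <- filter (fun j : 'I_n => (i < j)%N) (enum 'I_n)]>>%VS.

Definition span_from (K : fieldType) (A : falgType K) (n : nat)
  (u : 'I_n -> A) (i : nat) : {vspace A} :=
  <<[seq u j | j <- filter (fun j : 'I_n => (i <= j)%N) (enum 'I_n)]>>%VS.

Definition monomial (K : fieldType) (A : falgType K) (n p : nat)
  (u : 'I_n -> A) (e : {ffun 'I_n -> 'I_p}) : A :=
  \prod_(j < n) u j ^+ e j.

(* Evaluation k[s,t] -> A, s |-> x, t |-> y, where k[s,t] is encoded as
   {poly {poly K}}: the inner variable is s (written 'X%:P), the outer
   variable is t (written 'X). *)
Definition eval2 (K : fieldType) (A : falgType K) (x y : A)
  (P : {poly {poly K}}) : A :=
  (map_poly (horner_alg x) P).[y].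

From HB Require Import structures.
From mathcomp Require Import all_boot all_order all_algebra all_field.
From mathcomp Require Import zify.
Import GRing.Theory.
Local Open Scope ring_scope.

(* Write S_s for the span of u_s, ..., u_(n-1) and J_s = A S_s.
   - Ideal chain.  J_s is a left ideal by definition, and a right ideal by
     downward induction on s, since u_s commutes with A modulo J_(s+1).
     Writing x in J_s as a u_s + y with y in J_(s+1) and using u_s^p = 0, the
     ideal J_s annihilates u_s^(p-1) ... u_(n-1)^(p-1): this is part (b).
   - Spanning.  With M_s the span of the ordered monomials in u_0, ...,
     u_(s-1), A = M_s + J_s for all s <= n; at s = n the p^n ordered
     monomials span A, hence form a basis as dim A = p^n: part (a).
   - Part (c).  If a_m is the first nonzero coefficient of v, then v = a_m u_m
     modulo J_(m+1), so v^(p-1) times the top monomial from m+1 is a nonzero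
     multiple of a basis monomial; u_(n-1) being central, v^(p-1) u_(n-1)^(p-1)
     is nonzero.  A separate section studies evaluation k[s,t] -> A at (x, y),
     y central, x^p = y^p = 0, x^(p-1) y^(p-1) != 0: the x^i y^j (i, j < p)
     are independent, so its image is the algebra generated by x, y and its
     kernel is (s^p, t^p). *)

Lemma down_ind (n : nat) (P : nat -> Prop) :
  (forall s, (n <= s)%N -> P s) -> (forall s, (s < n)%N -> P s.+1 -> P s) ->
  forall s, P s.
Proof.
move=> Pge Pstep s.
suff Pd : forall d t, (n - t <= d)%N -> P t by exact: (Pd _ _ (leqnn _)).
elim=> [|d IHd] t ht; first by apply: Pge; lia.
by have [/Pge // | lt_tn] := leqP n t; apply: Pstep (IHd _ _) => //; lia.
Qed.

Lemma prod_ord_cut {R : pzSemiRingType} {m k : nat} {F : 'I_m.+1 -> R} :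
  (k <= m.+1)%N -> (forall t : 'I_m.+1, (k <= t)%N -> F t = 1) ->
  \prod_(t < m.+1) F t = \prod_(i < k) F (inord i).
Proof.
move=> le_km F1.
rewrite (big_ord_widen _ (fun i => F (inord i)) le_km) [RHS]big_mkcond /=.
by apply: eq_bigr => t _; rewrite inord_val; case: ltnP => // /F1.
Qed.

Lemma first_nonzero (R : nmodType) (m b : nat) (a : 'I_m -> R) :
  (exists i : 'I_m, (i < b)%N /\ a i != 0) ->
  exists i : 'I_m, [/\ (i < b)%N, a i != 0 & forall j : 'I_m, (j < i)%N -> a j = 0].
Proof.
case=> i0 [lt_i0b nz_i0].
case: (@arg_minnP _ i0 (fun j => a j != 0) val nz_i0) => i nz_i min_i.
exists i; split=> [||j lt_ji]; first exact: leq_ltn_trans (min_i _ nz_i0) lt_i0b.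
  exact: nz_i.
by apply: contraTeq lt_ji => /min_i; rewrite -leqNgt.
Qed.

Lemma nilpotent_exp_gt0 {R : nzSemiRingType} {x : R} {p : nat} :
  x ^+ p = 0 -> (0 < p)%N.
Proof. by case: p => // /eqP; rewrite expr0 oner_eq0. Qed.

Lemma span_prodv_sub (K : fieldType) (A : falgType K) (X Y : seq A)
    (W : {vspace A}) :
  (forall a b, a \in X -> b \in Y -> a * b \in W) -> (<<X>> * <<Y>> <= W)%VS.
Proof.
move=> XYW; apply/prodvP => a b Xa Yb.
rewrite (coord_span (X := in_tuple X) Xa) (coord_span (X := in_tuple Y) Yb) mulr_suml.
apply: memv_suml => i _; rewrite mulr_sumr; apply: memv_suml => j _.
by rewrite -scalerAl -scalerAr !memvZ // XYW // mem_nth.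
Qed.

Lemma horner_alg_wide {K : fieldType} {A : falgType K} (x : A) (m : nat)
    (q : {poly K}) :
  (size q <= m)%N -> horner_alg x q = \sum_(i < m) q`_i *: x ^+ i.
Proof.
move=> size_q; rewrite /horner_alg /horner_morph /=.
rewrite (horner_coef_wide _ (leq_trans (size_poly _ _) size_q)).
by apply: eq_bigr => i _; rewrite coef_map /= mulr_algl.
Qed.

Section IdealChain.
(* The generators are indexed by 'I_n with n = n'.+1 > 0, so that inord is
   available to index products over nat ranges. *)
Context {K : fieldType} {p : nat} {A : falgType K} {n' : nat}.
Local Notation n := n'.+1.
Context {u : 'I_n -> A}.
Hypothesis u_comm : forall i : 'I_n, (i < n.-1)%N ->
  forall a : A, u i * a - a * u i \in ideal_gen (span_after u i).
Hypothesis u_last_central : forall i : 'I_n, val i = n.-1 ->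
  forall a : A, u i * a = a * u i.

Local Notation S s := (span_from u s).
Local Notation J s := (fullv * span_from u s)%VS.

Lemma mem_span_from s (j : 'I_n) : (s <= j)%N -> u j \in S s.
Proof. by move=> le_sj; apply/memv_span/map_f; rewrite mem_filter mem_enum le_sj. Qed.

Lemma span_from_ge s : (n <= s)%N -> S s = 0%VS.
Proof.
move=> le_ns; rewrite /span_from (eq_filter (a2 := pred0)) ?filter_pred0 ?span_nil //.
by move=> j /=; apply/negbTE; rewrite -ltnNge (leq_trans (ltn_ord j)).
Qed.

Lemma span_from_mono {s t} : (s <= t)%N -> (S t <= S s)%VS.
Proof.
move=> le_st; apply/span_subvP => x /mapP[j]; rewrite mem_filter => /andP[le_tj _] ->.
exact/mem_span_from/(leq_trans le_st).
Qed.

Lemma span_from_split {s} (lt_sn : (s < n)%N) :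
  (S s <= <[u (Ordinal lt_sn)]> + S s.+1)%VS.
Proof.
apply/span_subvP => x /mapP[j]; rewrite mem_filter => /andP[le_sj _] ->.
move: le_sj; rewrite leq_eqVlt => /predU1P[eq_sj | lt_sj].
  have -> : j = Ordinal lt_sn by exact: val_inj.
  exact/(subvP (addvSl _ _))/memv_line.
exact/(subvP (addvSr _ _))/mem_span_from.
Qed.

Lemma span_from_sub_ideal s : (S s <= J s)%VS.
Proof. by rewrite -{1}(prod1v (S s)) prodvSl ?subvf. Qed.

Lemma ideal_from_mono {s t} : (s <= t)%N -> (J t <= J s)%VS.
Proof. by move=> le_st; rewrite prodvSr ?span_from_mono. Qed.

Lemma ideal_from_left s : (fullv * J s <= J s)%VS.
Proof. by rewrite prodvA prodvSl ?subvf. Qed.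

Lemma commutator_mem {s} (lt_sn : (s < n)%N) (a : A) :
  u (Ordinal lt_sn) * a - a * u (Ordinal lt_sn) \in (J s.+1 * fullv)%VS.
Proof.
have [lt_s_last | ge_s_last] := ltnP s n.-1; first exact: u_comm.
by rewrite u_last_central ?subrr ?mem0v //=; lia.
Qed.

(* J_s is also a right ideal, by downward induction on s: J_s A lies in
   A u_s A + J_(s+1) A, and u_s a = a u_s + [u_s, a] with [u_s, a] in J_(s+1). *)
Lemma ideal_from_right s : (J s * fullv <= J s)%VS.
Proof.
elim/(@down_ind n): s => [s le_ns | s lt_sn IHs].
  by rewrite span_from_ge // prodv0 prod0v sub0v.
rewrite -prodvA; apply: (subv_trans _ (ideal_from_left s)); apply: prodvSr.
apply: (subv_trans (prodvSl _ (span_from_split lt_sn))).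
rewrite prodvDl subv_add; apply/andP; split; last first.
  apply: (subv_trans (prodvSl _ (span_from_sub_ideal _))).
  exact: (subv_trans IHs (ideal_from_mono (leqnSn s))).
apply/prodvP => _ a /vlineP[c ->] _; rewrite -scalerAl memvZ //.
rewrite -[_ * a](subrK (a * u (Ordinal lt_sn))) addrC memvD //.
  by rewrite memv_mul ?memvf ?mem_span_from.
have /(subvP IHs) := commutator_mem lt_sn a.
exact/subvP/ideal_from_mono.
Qed.

Lemma ideal_from_mulr s x a : x \in J s -> x * a \in J s.
Proof. by move=> Jx; apply/(subvP (ideal_from_right s))/memv_mul; rewrite ?memvf. Qed.

Lemma ideal_from_split {s} (lt_sn : (s < n)%N) :
  (J s <= fullv * <[u (Ordinal lt_sn)]> + J s.+1)%VS.
Proof. by rewrite -prodvDr prodvSr ?span_from_split. Qed.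

Hypothesis u_nil : forall i, u i ^+ p = 0.

Let p_gt0 : (0 < p)%N := nilpotent_exp_gt0 (u_nil ord0).

(* The top monomial u_s^(p-1) ... u_(n-1)^(p-1), written over a nat range so
   that its first factor can be split off. *)
Definition top_from s := \prod_(s <= j < n) u (inord j) ^+ p.-1.

Lemma top_fromE s : \prod_(j < n | (s <= j)%N) u j ^+ p.-1 = top_from s.
Proof.
rewrite /top_from big_geq_mkord; apply: eq_big => [j | j _] //.
by rewrite inord_val.
Qed.

Lemma top_from_recl (i : 'I_n) : top_from i = u i ^+ p.-1 * top_from i.+1.
Proof. by rewrite /top_from big_ltn // inord_val. Qed.

(* Part (b): J_s annihilates the top monomial from s on.  Downward induction:
   x = a u_s + y with y in J_(s+1), where a u_s^p = 0 and y u_s^(p-1) is in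
   J_(s+1). *)
Lemma ideal_from_annihilates {s x} : x \in J s -> x * top_from s = 0.
Proof.
elim/(@down_ind n): s x => [s le_ns | s lt_sn IHs] x.
  by rewrite span_from_ge // prodv0 memv0 => /eqP ->; rewrite mul0r.
move/(subvP (ideal_from_split lt_sn)) => /memv_addP[_ /memv_cosetP[a _ ->] [y Jy ->]].
rewrite (top_from_recl (Ordinal lt_sn)) mulrDl !mulrA -(mulrA a) -exprS prednK // u_nil.
by rewrite mulr0 mul0r add0r IHs ?ideal_from_mulr.
Qed.

Definition supported_below s (e : {ffun 'I_n -> 'I_p}) :=
  [forall j : 'I_n, (s <= j)%N ==> (e j == 0 :> nat)].

Definition lower_monomials s : {vspace A} :=
  <<[seq monomial u e | e <- enum {ffun 'I_n -> 'I_p} & supported_below s e]>>%VS.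
Local Notation M s := (lower_monomials s).

Definition set_exponent (e : {ffun 'I_n -> 'I_p}) s (k : 'I_p) :=
  [ffun t : 'I_n => if val t == s then k else e t].

Lemma supported_below_set {s e} k :
  supported_below s e -> supported_below s.+1 (set_exponent e s k).
Proof.
move=> /forallP e0; apply/forallP => t; apply/implyP => lt_st.
by rewrite /set_exponent ffunE (gtn_eqF lt_st); apply: (implyP (e0 t)); rewrite ltnW.
Qed.

Lemma monomial_set {s} (lt_sn : (s < n)%N) {e} (k : 'I_p) : supported_below s e ->
  monomial u e * u (Ordinal lt_sn) ^+ k = monomial u (set_exponent e s k).
Proof.
move=> e0; have e'0 := supported_below_set k e0.
have exp0 s' e' (t : 'I_n) : supported_below s' e' -> (s' <= t)%N -> u t ^+ e' t = 1.
  by move=> /forallP/(_ t)/implyP e'0t /e'0t/eqP->.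
rewrite /monomial (prod_ord_cut (ltnW lt_sn)) => [|t]; last exact: exp0 e0.
rewrite [RHS](prod_ord_cut lt_sn) => [|t]; last exact: exp0 e'0.
rewrite big_ord_recr /= /set_exponent ffunE /= inordK // eqxx.
congr (_ * u _ ^+ _); last first.
  by apply: val_inj; rewrite /= inordK.
apply: eq_bigr => i _; rewrite ffunE inordK ?(ltn_trans (ltn_ord i)) //.
by rewrite (ltn_eqF (ltn_ord i)).
Qed.

Lemma lower_monomials_mulr {s} (lt_sn : (s < n)%N) {k} : (k < p)%N ->
  (M s * <[u (Ordinal lt_sn) ^+ k]> <= M s.+1)%VS.
Proof.
move=> lt_kp; rewrite -limg_amulr limg_span; apply/span_subvP => x /mapP[y /mapP[e]].
rewrite mem_filter => /andP[e0 _] -> ->.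
rewrite lfunE /= (monomial_set lt_sn (Ordinal lt_kp) e0).
by apply/memv_span/map_f; rewrite mem_filter supported_below_set ?mem_enum.
Qed.

Lemma one_lower_monomials : 1 \in M 0.
Proof.
have -> : 1 = monomial u [ffun _ => Ordinal p_gt0].
  by rewrite /monomial big1 // => t _; rewrite ffunE expr0.
apply/memv_span/map_f; rewrite mem_filter mem_enum andbT.
by apply/forallP => t; rewrite ffunE.
Qed.

Hypothesis u_gen : agenv <<[seq u i | i <- enum 'I_n]>>%VS = fullv.

(* The invariant A = M_s + J_s holds for s = 0 ... *)
Lemma lower_monomials_span0 : (fullv <= M 0 + J 0)%VS.
Proof.
have S0 : <<[seq u i | i <- enum 'I_n]>>%VS = S 0.
  by rewrite /span_from (eq_filter (a2 := predT)) ?filter_predT.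
rewrite -[X in (X <= _)%VS]u_gen; apply: agenv_sub_modl.
  by rewrite -memvE (subvP (addvSl _ _)) ?one_lower_monomials.
apply: (subv_trans _ (addvSr _ _)); rewrite S0.
apply: (subv_trans (prodvS (span_from_sub_ideal 0) (subvf _))).
exact: ideal_from_right.
Qed.

(* ... and passes from s to s+1: A u_s^k lies in M_(s+1) + J_(s+1) for all k,
   by downward induction on k, since A u_s^k lies in M_s u_s^k + J_s u_s^k and
   J_s u_s^k lies in A u_s^(k+1) + J_(s+1). *)
Lemma lower_monomials_span_step {s} (lt_sn : (s < n)%N) :
  (fullv <= M s + J s)%VS -> (fullv <= M s.+1 + J s.+1)%VS.
Proof.
set w := u (Ordinal lt_sn) => span_s.
have mulw k : (fullv * <[w ^+ k]> <= M s.+1 + J s.+1)%VS.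
  elim/(@down_ind p): k => [k le_pk | k lt_kp IHk].
    apply/prodvP => x y _ /vlineP[c ->].
    by rewrite -(subnKC le_pk) exprD u_nil mul0r scaler0 mulr0 mem0v.
  apply: (subv_trans (prodvSl _ span_s)); rewrite prodvDl subv_add.
  rewrite (subv_trans (lower_monomials_mulr lt_sn lt_kp) (addvSl _ _)) /=.
  apply: (subv_trans (prodvSl _ (ideal_from_split lt_sn))); rewrite prodvDl subv_add.
  rewrite -prodvA prodv_line -exprS IHk /=.
  apply: (subv_trans (prodvSr _ (subvf _))).
  exact: (subv_trans (ideal_from_right _) (addvSr _ _)).
apply: (subv_trans span_s); rewrite subv_add.
have M_mono : (M s <= M s.+1)%VS by rewrite -[M s]prodv1 -(expr0 w) lower_monomials_mulr.
rewrite (subv_trans M_mono (addvSl _ _)) /=.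
apply: (subv_trans (ideal_from_split lt_sn)); rewrite subv_add addvSr andbT.
by have := mulw 1%N; rewrite expr1.
Qed.

Lemma monomials_span :
  (fullv <= <<[seq monomial u e | e <- enum {ffun 'I_n -> 'I_p}]>>)%VS.
Proof.
have span_s s : (s <= n)%N -> (fullv <= M s + J s)%VS.
  elim: s => [|s IHs] le_sn; first exact: lower_monomials_span0.
  exact/(lower_monomials_span_step le_sn)/IHs/ltnW.
have := span_s n (leqnn _); rewrite span_from_ge // prodv0 addv0 => /subv_trans; apply.
by apply/sub_span => x /mapP[e]; rewrite mem_filter => /andP[_ e_enum] ->; apply: map_f.
Qed.

Hypothesis dimA : \dim (fullv : {vspace A}) = (p ^ n)%N.

Lemma monomials_basis :
  basis_of fullv [seq monomial u e | e <- enum {ffun 'I_n -> 'I_p}].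
Proof.
by rewrite basisEdim monomials_span size_map -cardE card_ffun !card_ord dimA /=.
Qed.

(* Each top monomial is a basis vector, hence nonzero. *)
Lemma top_from_neq0 s : top_from s != 0.
Proof.
have lt_p1p : (p.-1 < p)%N by rewrite prednK.
have -> : top_from s =
    monomial u [ffun j : 'I_n => if (s <= j)%N then Ordinal lt_p1p else Ordinal p_gt0].
  rewrite /monomial -top_fromE big_mkcond /=; apply: eq_bigr => j _.
  by rewrite ffunE; case: ifP; rewrite ?expr0.
exact/(free_not0 (basis_free monomials_basis))/map_f/mem_enum.
Qed.

Lemma pow_mod_ideal {s} (c : K) (x y : A) k : y \in J s ->
  exists2 z, z \in J s & (c *: x + y) ^+ k = c ^+ k *: x ^+ k + z.
Proof.
move=> Jy; elim: k => [|k [z Jz powk]].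
  by exists 0; rewrite ?mem0v ?expr0 ?scale1r ?addr0.
exists (c ^+ k *: (x ^+ k * y) + z * (c *: x + y)).
  apply: memvD; last exact: ideal_from_mulr.
  by rewrite memvZ // (subvP (ideal_from_left s)) // memv_mul ?memvf.
by rewrite exprSr powk mulrDl mulrDr -!addrA -!scalerAl -scalerAr scalerA -!exprSr.
Qed.

(* If m is the first index with a_m != 0, then
   v = a_m u_m mod J_(m+1), so v^(p-1) u_(m+1)^(p-1) ... u_(n-1)^(p-1) is the
   nonzero monomial a_m^(p-1) u_m^(p-1) ... u_(n-1)^(p-1); as u_(n-1) is
   central, v^(p-1) u_(n-1)^(p-1) cannot vanish. *)
Lemma lin_comb_pow_neq0 {a : 'I_n -> K} {w : 'I_n} : val w = n.-1 ->
  (exists i : 'I_n, (i < n.-1)%N /\ a i != 0) ->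
  (\sum_(i < n) a i *: u i) ^+ p.-1 * u w ^+ p.-1 != 0.
Proof.
move=> w_last /first_nonzero[m [lt_m_last nz_am a_lt_m]].
set v := \sum_(i < n) a i *: u i.
have v_lead : v - a m *: u m \in J m.+1.
  apply: (subvP (span_from_sub_ideal _)).
  rewrite /v (bigD1 m) //= addrAC subrr add0r; apply: memv_suml => i ne_im.
  have [lt_im | lt_mi | eq_im] := ltngtP i m.
  - by rewrite a_lt_m // scale0r mem0v.
  - by rewrite memvZ ?mem_span_from.
  - by rewrite -val_eqE /= eq_im eqxx in ne_im.
have [z Jz] := pow_mod_ideal (a m) (u m) _ p.-1 v_lead; rewrite addrC subrK => v_pow.
have v_top : v ^+ p.-1 * top_from m.+1 = a m ^+ p.-1 *: top_from m.
  by rewrite v_pow mulrDl (ideal_from_annihilates Jz) addr0 -scalerAl -top_from_recl.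
have top_last : top_from m.+1 =
    (\prod_(m.+1 <= j < n.-1) u (inord j) ^+ p.-1) * u w ^+ p.-1.
  rewrite /top_from big_nat_recr //=; congr (_ * u _ ^+ _).
  by apply: val_inj; rewrite /= inordK ?w_last.
apply: contraNneq (top_from_neq0 m) => v_w0.
rewrite -(inj_eq (scalerI (expf_neq0 p.-1 nz_am))) scaler0 -v_top top_last.
set P := \prod_(m.+1 <= j < n.-1) _.
by rewrite (commrX p.-1 (esym (u_last_central w w_last P))) mulrA v_w0 mul0r.
Qed.

End IdealChain.

Section TwoVariableEvaluation.
Context {K : fieldType} {A : falgType K} {x y : A}.
Hypothesis y_central : forall a : A, y * a = a * y.
Local Notation E := (eval2 x y).

Lemma eval2D P Q : E (P + Q) = E P + E Q.
Proof. by rewrite /eval2 rmorphD hornerD. Qed.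

Lemma eval20 : E 0 = 0.
Proof. by rewrite /eval2 rmorph0 horner0. Qed.

Lemma eval2M P Q : E (P * Q) = E P * E Q.
Proof. by rewrite /eval2 rmorphM hornerM_comm // /comm_poly y_central. Qed.

Lemma eval21 : E 1 = 1.
Proof. by rewrite /eval2 rmorph1 hornerC. Qed.

Lemma eval2C q : E q%:P = horner_alg x q.
Proof. by rewrite /eval2 map_polyC hornerC. Qed.

Lemma eval2_s : E ('X%:P) = x.
Proof. by rewrite eval2C horner_algX. Qed.

Lemma eval2_t : E 'X = y.
Proof. by rewrite /eval2 map_polyX hornerX. Qed.

Lemma eval2Z c P : E (c%:P%:P * P) = c *: E P.
Proof. by rewrite eval2M eval2C horner_algC mulr_algl. Qed.

Lemma eval2X P k : E (P ^+ k) = E P ^+ k.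
Proof. by elim: k => [|k IHk]; rewrite ?expr0 ?eval21 // !exprS eval2M IHk. Qed.

Lemma eval2_sum I (r : seq I) (F : I -> {poly {poly K}}) :
  E (\sum_(i <- r) F i) = \sum_(i <- r) E (F i).
Proof. exact: (big_morph E eval2D eval20). Qed.

Lemma eval2_monomial i j : E ('X%:P ^+ i * 'X ^+ j) = x ^+ i * y ^+ j.
Proof. by rewrite eval2M !eval2X eval2_s eval2_t. Qed.

Lemma horner_alg_mem (q : {poly K}) : horner_alg x q \in agenv <<[:: x; y]>>%VS.
Proof.
elim/poly_ind: q => [|q c IHq]; first by rewrite rmorph0 mem0v.
rewrite rmorphD rmorphM /= horner_algX horner_algC memvD ?memvM //.
  by rewrite (subvP (sub_agenv _)) ?memv_span ?mem_head.
by rewrite memvZ // memvE sub1_agenv.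
Qed.

Lemma eval2_mem P : E P \in agenv <<[:: x; y]>>%VS.
Proof.
elim/poly_ind: P => [|P c IHP]; first by rewrite eval20 mem0v.
rewrite eval2D eval2M eval2_t eval2C memvD ?memvM ?horner_alg_mem //.
by rewrite (subvP (sub_agenv _)) ?memv_span // !inE eqxx orbT.
Qed.

Context {p : nat}.
Hypothesis x_nil : x ^+ p = 0.
Hypothesis y_nil : y ^+ p = 0.

Lemma x_pow_ge k : (p <= k)%N -> x ^+ k = 0.
Proof. by move=> le_pk; rewrite -(subnKC le_pk) exprD x_nil mul0r. Qed.

Lemma y_pow_ge k : (p <= k)%N -> y ^+ k = 0.
Proof. by move=> le_pk; rewrite -(subnKC le_pk) exprD y_nil mul0r. Qed.

Definition small_monomials : seq {poly {poly K}} :=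
  [seq 'X%:P ^+ i * 'X ^+ j | i <- iota 0 p, j <- iota 0 p].

Lemma mem_eval2_small i j : x ^+ i * y ^+ j \in <<map E small_monomials>>%VS.
Proof.
have [lt_ip | le_pi] := ltnP i p; last by rewrite x_pow_ge ?mul0r ?mem0v.
have [lt_jp | le_pj] := ltnP j p; last by rewrite y_pow_ge ?mulr0 ?mem0v.
rewrite -eval2_monomial memv_span // map_f //.
by apply: allpairs_f; rewrite mem_iota.
Qed.

(* The image of E is exactly the subalgebra generated by x and y: the span of
   the x^i y^j contains 1 and is stable under right multiplication by x, y. *)
Lemma eval2_image z : z \in agenv <<[:: x; y]>>%VS <-> exists P, E P = z.
Proof.
split=> [|[P <-]]; last exact: eval2_mem.
have /subvP sub_span : (agenv <<[:: x; y]>> <= <<map E small_monomials>>)%VS.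
  apply: agenv_sub_modl.
    by rewrite -memvE -[1]mulr1 -{1}(expr0 x) -(expr0 y) mem_eval2_small.
  apply: span_prodv_sub => a b; rewrite !inE.
  move=> /orP[] /eqP-> /mapP[_ /allpairsP[[i j] /= [_ _ ->]] ->].
    by rewrite eval2_monomial mulrA -exprS mem_eval2_small.
  by rewrite eval2_monomial mulrA y_central -mulrA -exprS mem_eval2_small.
move=> /sub_span z_span; set X := in_tuple (map E small_monomials).
exists (\sum_i (coord X i z)%:P%:P * small_monomials`_i).
rewrite [RHS](coord_span (X := X) z_span) eval2_sum; apply: eq_bigr => i _.
by rewrite eval2Z /= (nth_map 0) // -(size_map E) (ltn_ord i).
Qed.

Lemma sandwich_small i j i' j' : (i < p)%N -> (j < p)%N ->
  x ^+ (p.-1 - i) * (x ^+ i' * y ^+ j') * y ^+ (p.-1 - j) =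
    if (i' <= i)%N && (j' <= j)%N
    then x ^+ (p.-1 - (i - i')) * y ^+ (p.-1 - (j - j')) else 0.
Proof.
move=> lt_ip lt_jp; rewrite !mulrA -exprD -mulrA -exprD.
case: ifP => [/andP[le_i'i le_j'j] | /nandP[]]; rewrite -?ltnNge.
- by congr (x ^+ _ * y ^+ _); lia.
- by move=> lt_ii'; rewrite x_pow_ge ?mul0r //; lia.
- by move=> lt_jj'; rewrite y_pow_ge ?mulr0 //; lia.
Qed.

Hypothesis top_neq0 : x ^+ p.-1 * y ^+ p.-1 != 0.

(* The x^i y^j with i, j < p are linearly independent: by induction on i + j,
   sandwiching the relation leaves only c i j x^(p-1) y^(p-1). *)
Lemma small_monomials_free (c : nat -> nat -> K) :
  \sum_(j < p) \sum_(i < p) c i j *: (x ^+ i * y ^+ j) = 0 ->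
  forall i j, (i < p)%N -> (j < p)%N -> c i j = 0.
Proof.
move=> sum0.
suff c0 d i j : (i + j < d)%N -> (i < p)%N -> (j < p)%N -> c i j = 0.
  by move=> i j; apply: c0 (ltnSn _).
elim: d i j => // d IHd i j; rewrite ltnS => le_ijd lt_ip lt_jp.
have others i' j' : ~~ ((i' == i) && (j' == j)) ->
    x ^+ (p.-1 - i) * (c i' j' *: (x ^+ i' * y ^+ j')) * y ^+ (p.-1 - j) = 0.
  move=> neq; rewrite -scalerAr -scalerAl sandwich_small //.
  case: ifP => [/andP[le_i'i le_j'j] | _]; last by rewrite scaler0.
  by rewrite IHd ?scale0r //; move: neq; rewrite negb_and => /orP[] ?; lia.
have := congr1 (fun z => x ^+ (p.-1 - i) * z * y ^+ (p.-1 - j)) sum0.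
rewrite /= mulr0 mul0r mulr_sumr mulr_suml.
under eq_bigr => j' _ do rewrite mulr_sumr mulr_suml.
rewrite pair_big (bigD1 (Ordinal lt_jp, Ordinal lt_ip)) //= big1; last first.
  by move=> [j' i'] /=; rewrite xpair_eqE andbC => /others.
rewrite -scalerAr -scalerAl sandwich_small // !leqnn !subnn !subn0 addr0.
by move/eqP; rewrite scaler_eq0 (negbTE top_neq0) orbF => /eqP.
Qed.

(* The kernel of E is the ideal (s^p, t^p): write P = P0 + Q s^p + R t^p with
   P0 of degree < p in s and in t; then E P = E P0 is a combination of the
   independent x^i y^j, so P0 = 0. *)
Lemma eval2_kernel P : E P = 0 <-> exists Q R, P = Q * 'X%:P ^+ p + R * 'X ^+ p.
Proof.
split=> [|[Q [R ->]]]; last first.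
  by rewrite eval2D !eval2M !eval2X eval2_s eval2_t x_nil y_nil !mulr0 addr0.
set P1 := take_poly p P; set R := drop_poly p P.
set P0 := map_poly (take_poly p) P1; set Q := map_poly (drop_poly p) P1.
have P1E : P1 = P0 + Q * ('X ^+ p)%:P.
  apply/polyP => k; rewrite coefD coefMC !coef_map_id0 ?take_poly0r ?drop_poly0r //.
  by rewrite poly_take_drop.
have PE : P = P0 + Q * 'X%:P ^+ p + R * 'X ^+ p.
  by rewrite -[LHS](poly_take_drop p) -/P1 P1E rmorphXn.
rewrite PE !eval2D !eval2M !eval2X eval2_s eval2_t x_nil y_nil !mulr0 !addr0 => EP0.
exists Q, R; suff -> : P0 = 0 by rewrite add0r.
have size_P0 : (size P0 <= p)%N := leq_trans (size_poly _ _) (size_take_poly _ _).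
have P0_coef : forall i j, (i < p)%N -> (j < p)%N -> P0`_j`_i = 0.
  apply: (@small_monomials_free (fun i j => P0`_j`_i)); rewrite -[RHS]EP0 /eval2.
  rewrite [RHS](horner_coef_wide _ (leq_trans (size_poly _ _) size_P0)).
  apply: eq_bigr => j _; rewrite [in RHS]coef_map /= (horner_alg_wide x p); last first.
    by rewrite coef_map_id0 ?take_poly0r // size_take_poly.
  by rewrite mulr_suml; apply: eq_bigr => i _; rewrite scalerAl.
apply/polyP => j; rewrite coef0; apply/polyP => i; rewrite coef0.
have [lt_jp | le_pj] := ltnP j p; last first.
  rewrite coef_map_id0 ?take_poly0r // /P1 (coef_take_poly p P) ltnNge le_pj.
  by rewrite take_poly0r coef0.
have [lt_ip | le_pi] := ltnP i p; first exact: P0_coef.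
by rewrite coef_map_id0 ?take_poly0r // coef_take_poly ltnNge le_pi.
Qed.

End TwoVariableEvaluation.

Theorem lemma4p2 (K : closedFieldType) (p : nat) (A : falgType K)
    (n : nat) (u : 'I_n -> A) :
  p \in [pchar K] ->
  (1 < n)%N ->
  (* A is generated as a K-algebra by u_1, ..., u_n *)
  agenv <<[seq u i | i <- enum 'I_n]>>%VS = fullv ->
  (* H1 (a) *)
  (forall i, u i ^+ p = 0) ->
  (* H1 (b): u_i central modulo the two-sided ideal I_i gen. by u_{i+1},...,u_n *)
  (forall i : 'I_n, (i < n.-1)%N ->
     forall a : A, u i * a - a * u i \in ideal_gen (span_after u i)) ->
  (* H1 (c): u_n central *)
  (forall i : 'I_n, val i = n.-1 -> forall a : A, u i * a = a * u i) ->
  (* H1 (d) *)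
  \dim (fullv : {vspace A}) = (p ^ n)%N ->
  (* (a) *)
  basis_of fullv [seq monomial u e | e <- enum {ffun 'I_n -> 'I_p}]
  /\
  (* (b) *)
  (forall s : nat, (s < n)%N ->
     ((fullv * (fullv * span_from u s) <= fullv * span_from u s)%VS
      /\ ((fullv * span_from u s) * fullv <= fullv * span_from u s)%VS)
     /\ forall x, x \in (fullv * span_from u s)%VS ->
          x * \prod_(j < n | (s <= j)%N) u j ^+ p.-1 = 0)
  /\
  (* (c) *)
  (forall (a : 'I_n -> K) (w : 'I_n), val w = n.-1 ->
     let v := \sum_(i < n) a i *: u i in
     (exists i : 'I_n, (i < n.-1)%N /\ a i != 0) ->
     v ^+ p = 0 ->
     [/\ v ^+ p.-1 * u w ^+ p.-1 != 0,
         v ^+ p.-1 \notin (fullv * <[u w]>)%VS,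
         (* the evaluation map k[s,t] -> A, s |-> v, t |-> u_n, is a
            K-algebra morphism ... *)
         eval2 v (u w) 1 = 1
           /\ (forall (c : K) (P Q : {poly {poly K}}),
                 eval2 v (u w) (c%:P%:P * P + Q)
                   = c *: eval2 v (u w) P + eval2 v (u w) Q
                 /\ eval2 v (u w) (P * Q) = eval2 v (u w) P * eval2 v (u w) Q),
         (* ... whose image is the subalgebra generated by v and u_n ... *)
         (forall x : A, x \in agenv <<[:: v; u w]>>%VS <->
                          exists P, eval2 v (u w) P = x)
       & (* ... and whose kernel is the ideal (s^p, t^p). *)
         (forall P : {poly {poly K}}, eval2 v (u w) P = 0 <->
            exists Q R : {poly {poly K}},
              P = Q * ('X%:P) ^+ p + R * 'X ^+ p)]).
Proof.
case: n u => [//|n'] u _ _ u_gen u_nil u_comm u_last_central dimA.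
split; first exact: (monomials_basis u_comm u_last_central u_nil u_gen dimA).
split=> [s lt_sn | a w w_last v nz_a v_nil].
  split; first by split; [exact: ideal_from_left | exact: ideal_from_right].
  by move=> x Jx; rewrite top_fromE (ideal_from_annihilates u_comm u_last_central u_nil Jx).
have v_w_neq0 : v ^+ p.-1 * u w ^+ p.-1 != 0.
  exact: (lin_comb_pow_neq0 u_comm u_last_central u_nil u_gen dimA w_last nz_a).
have w_central := u_last_central w w_last.
split=> //.
- (* v^(p-1) = b u_w would give v^(p-1) u_w^(p-1) = b u_w^p = 0. *)
  apply: contra v_w_neq0 => /memv_cosetP[b _ ->].
  by rewrite -mulrA -exprS prednK ?u_nil ?mulr0 // (nilpotent_exp_gt0 v_nil).
- split=> [|c P Q]; first exact: eval21.
  by rewrite eval2D (eval2Z w_central) (eval2M w_central).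
- by move=> z; exact: (eval2_image w_central v_nil (u_nil w)).
- by move=> P; exact: (eval2_kernel w_central v_nil (u_nil w) v_w_neq0).
Qed.
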